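(* Fix a real number $0<q<1$ and $\nu\in\mathbb{S}^1$. Order the standard orthonormal basis of $L^2(\mathbb{S}^1)$ by setting $e_{2n}:=e^{-in\theta}$ for $n\geq 0$ and $e_{2n-1}:=e^{in\theta}$ for $n\geq 1$, and put $e_{-1}:=0$. Define $\sigma_{c,\nu},\sigma_{a,\nu}:\mathbb{S}^1\times\mathbb{Z}\to\mathbb{C}$ by $\sigma_{c,\nu}(\theta,n)=q^{-2n}\nu$ for $n\leq 0$ and $\sigma_{c,\nu}(\theta,n)=q^{2n-1}\nu$ for $n\geq 1$; $\sigma_{a,\nu}(\theta,0)=0$, $\sigma_{a,\nu}(\theta,n)=\sqrt{1-q^{2(2n-1)}}\,e^{-(2n-1)i\theta}$ for $n\geq 1$, and $\sigma_{a,\nu}(\theta,n)=\sqrt{1-q^{2(-2n)}}\,e^{-2ni\theta}$ for $n\leq -1$. Let $T_{c,\nu}$ and $T_{a,\nu}$ be the periodic pseudo-differential operators $T_{\sigma}f(\theta)=\sum_{n\in\mathbb{Z}}\hat f(n)\sigma(\theta,n)e^{in\theta}$ with symbols $\sigma=\sigma_{c,\nu}$ and $\sigma=\sigma_{a,\nu}$ respectively. Then for every $k\geq 0$, $$T_{c,\nu}e_k=q^{k}\nu\, e_k,\qquad T_{a,\nu}e_k=\sqrt{1-q^{2k}}\,e_{k-1},$$ i.e. $T_{a,\nu}$ and $T_{c,\nu}$ act on the basis $(e_k)_{k\ge0}$ exactly as $\pi^\infty_\nu(a)$ and $\pi^\infty_\nu(c)$ in Woronowicz's infinite-dimensional representation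 $\pi^\infty_\nu(a)e_k=\sqrt{1-q^{2k}}e_{k-1}$, $\pi^\infty_\nu(c)e_k=q^k\nu e_k$ of $SU_q(2)$.
   Context: For $f\in L^1(\mathbb{S}^1)$, $\hat f(n)=\frac{1}{2\pi}\int_0^{2\pi}f(\theta)e^{-in\theta}\,d\theta$ denotes its $n$-th Fourier coefficient. $SU_q(2)$ is the $*$-algebra generated by $a,c$ subject to $ac^*=qc^*a$, $ca^*=qa^*c$, $c^*a^*=qa^*c^*$, $c^*c=cc^*$, $aa^*+q^2c^*c=a^*a+c^*c=1$. *)

From Stdlib Require Export Reals ZArith.
From Coquelicot Require Export Coquelicot.
Open Scope R_scope.

Definition expi (t : R) : C := (cos t, sin t).

(* Functions on S^1 are represented as 2pi-periodic functions R -> C. *)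
Definition fourier_coef (f : R -> C) (n : Z) : C :=
  scal (/ (2 * PI)) (RInt (V := C_R_CompleteNormedModule)
                       (fun th => Cmult (f th) (expi (- IZR n * th))) 0 (2 * PI)).

Definition sym_sum (g : Z -> C) (N : nat) : C :=
  sum_n (fun m : nat => g (Z.of_nat m - Z.of_nat N)%Z) (2 * N).

(* T_sigma f(theta) = sum_{n in Z} hat f(n) sigma(theta,n) e^{i n theta}; the
   relation says that the series (symmetric partial sums) converges to v. *)
Definition PsiDO_at (sigma : R -> Z -> C) (f : R -> C) (th : R) (v : C) : Prop :=
  filterlim (sym_sum (fun n => Cmult (Cmult (fourier_coef f n) (sigma th n)) (expi (IZR n * th))))
            eventually (locally v).

Definition ebasis (k : Z) (th : R) : C :=
  if (k <? 0)%Z then RtoC 0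
  else if Z.even k then expi (- IZR (k / 2) * th)
  else expi (IZR ((k + 1) / 2) * th).

Definition sigma_c (q : R) (nu : C) (th : R) (n : Z) : C :=
  if (n <=? 0)%Z then Cmult (RtoC (powerRZ q (-2 * n))) nu
  else Cmult (RtoC (powerRZ q (2 * n - 1))) nu.

Definition sigma_a (q : R) (nu : C) (th : R) (n : Z) : C :=
  if (n =? 0)%Z then RtoC 0
  else if (1 <=? n)%Z then
    Cmult (RtoC (sqrt (1 - powerRZ q (2 * (2 * n - 1))))) (expi (- IZR (2 * n - 1) * th))
  else
    Cmult (RtoC (sqrt (1 - powerRZ q (2 * (- 2 * n))))) (expi (- IZR (2 * n) * th)).

(** The basis vector [e_k] is the character [t ↦ e^{i ω_k t}] of frequency
    [ω_{2m} = -m], [ω_{2m+1} = m+1].  By orthogonality of the characters on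
    [[0, 2π]], the Fourier coefficients of [e_k] are a Kronecker delta at [ω_k],
    so the symmetric partial sums of [T_σ e_k (θ)] are eventually constant, equal
    to [σ(θ, ω_k) e^{i ω_k θ}].  The symbols are built so that
    [σ_c(θ, ω_k) = q^k ν] and [σ_a(θ, ω_k) e^{i ω_k θ} = √(1 - q^{2k}) e_{k-1}(θ)].
    These identities hold for every real [q] and complex [ν]. *)

From Stdlib Require Import Lia Lra FunctionalExtensionality.

Lemma scal_C_R (r : R) (z : C) :
  @scal _ C_R_CompleteNormedModule r z = Cmult (RtoC r) z.
Proof.
  destruct z as [a b].
  apply injective_projections; cbn; unfold scal, mult; cbn; ring.
Qed.

Lemma expi_0 : expi 0 = RtoC 1.
Proof. unfold expi. now rewrite cos_0, sin_0. Qed.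

Lemma expi_add (a b : R) : Cmult (expi a) (expi b) = expi (a + b).
Proof.
  unfold expi. rewrite cos_plus, sin_plus.
  apply injective_projections; cbn; ring.
Qed.

Lemma sin_IZR_mul_2PI (d : Z) : sin (IZR d * (2 * PI)) = 0.
Proof. apply sin_eq_0_1. exists (2 * d)%Z. rewrite mult_IZR. ring. Qed.

Lemma cos_IZR_mul_2PI (d : Z) : cos (IZR d * (2 * PI)) = 1.
Proof.
  replace (IZR d * (2 * PI)) with (2 * (IZR d * PI)) by ring.
  rewrite cos_2a_sin, sin_eq_0_1 by (exists d; ring). ring.
Qed.

Lemma is_RInt_scal_derive_const {V : CompleteNormedModule R_AbsRing}
    (f f' : R -> R) (v : V) (a b : R) :
  (forall t, Rmin a b <= t <= Rmax a b -> is_derive f t (f' t)) ->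
  (forall t, Rmin a b <= t <= Rmax a b -> continuous f' t) ->
  is_RInt (fun t => scal (f' t) v) a b (scal (f b - f a) v).
Proof.
  intros Hf Hf'.
  assert (H := is_RInt_scal_derive f (fun _ => v) f' (fun _ => @zero V) a b Hf
    (fun t _ => is_derive_const v t) Hf' (fun t _ => continuous_const (@zero V) t)).
  rewrite <- scal_minus_distr_r in H.
  eapply is_RInt_ext; [|exact H].
  intros t _. etransitivity; [|apply plus_zero_r].
  f_equal. exact (@scal_zero_r R_Ring _ (f t)).
Qed.

Lemma is_RInt_expi_period (d : Z) : d <> 0%Z ->
  is_RInt (V := C_R_CompleteNormedModule)
    (fun t => expi (IZR d * t)) 0 (2 * PI) (RtoC 0).
Proof.
  intros Hd. assert (Hd' : IZR d <> 0) by now apply not_0_IZR.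
  (* antiderivative [(sin (d t) - i cos (d t)) / d], periodic on [[0, 2π]] *)
  assert (Hre := is_RInt_scal_derive_const (V := C_R_CompleteNormedModule)
    (fun t => sin (IZR d * t) / IZR d)
    (fun t => cos (IZR d * t)) (RtoC 1) 0 (2 * PI)
    ltac:(intros; auto_derive; [easy | field; easy])
    ltac:(intros; apply (ex_derive_continuous (V := R_NormedModule)); auto_derive; easy)).
  assert (Him := is_RInt_scal_derive_const (V := C_R_CompleteNormedModule)
    (fun t => - cos (IZR d * t) / IZR d)
    (fun t => sin (IZR d * t)) Ci 0 (2 * PI)
    ltac:(intros; auto_derive; [easy | field; easy])
    ltac:(intros; apply (ex_derive_continuous (V := R_NormedModule)); auto_derive; easy)).
  assert (H := is_RInt_plus _ _ _ _ _ _ Hre Him). cbv beta in H.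
  rewrite Rmult_0_r, sin_0, cos_0, sin_IZR_mul_2PI, cos_IZR_mul_2PI in H.
  match type of H with is_RInt _ _ _ ?l => replace l with (RtoC 0) in H end.
  2: { rewrite !Rminus_diag, !scal_C_R. apply injective_projections; cbn; unfold plus; cbn; ring. }
  eapply is_RInt_ext; [|exact H].
  intros t _. cbv beta. rewrite !scal_C_R.
  apply injective_projections; cbn; unfold plus; cbn; ring.
Qed.

Lemma fourier_coef_expi (j n : Z) :
  fourier_coef (fun t => expi (IZR j * t)) n = if (n =? j)%Z then RtoC 1 else RtoC 0.
Proof.
  unfold fourier_coef.
  rewrite (RInt_ext (V := C_R_CompleteNormedModule) _ (fun t => expi (IZR (j - n) * t))).
  2: { intros t _. rewrite expi_add, minus_IZR. f_equal. ring. }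
  assert (HPI := PI_RGT_0).
  destruct (Z.eqb_spec n j) as [->|Hne].
  - rewrite Z.sub_diag.
    rewrite (RInt_ext (V := C_R_CompleteNormedModule) _ (fun _ => RtoC 1)).
    2: { intros t _. now rewrite Rmult_0_l, expi_0. }
    rewrite RInt_const, !scal_C_R.
    apply injective_projections; cbn; field; lra.
  - rewrite (is_RInt_unique _ _ _ _ (is_RInt_expi_period (j - n) ltac:(lia))), scal_C_R.
    apply injective_projections; cbn; ring.
Qed.

Lemma sum_n_single {G : AbelianMonoid} (a : nat -> G) (m0 n : nat) :
  (m0 <= n)%nat -> (forall m, m <> m0 -> a m = zero) -> sum_n a n = a m0.
Proof.
  intros Hle Ha.
  assert (Hzero : forall p, (p < m0)%nat -> sum_n a p = zero).
  { intros p Hp. rewrite (sum_n_ext_loc _ (fun _ => zero)).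
    - apply sum_n_m_const_zero.
    - intros i Hi. apply Ha. lia. }
  induction n as [|n IH].
  - replace m0 with 0%nat by lia. apply sum_O.
  - rewrite sum_Sn. destruct (Nat.eq_dec m0 (S n)) as [->|Hne].
    + rewrite Hzero by lia. apply plus_zero_l.
    + rewrite IH, (Ha (S n)) by lia. apply plus_zero_r.
Qed.

(* The partial sums are constant as soon as [N >= |j|], when frequency [j] enters the window. *)
Lemma PsiDO_at_expi (sigma : R -> Z -> C) (j : Z) (th : R) (v : C) :
  Cmult (sigma th j) (expi (IZR j * th)) = v ->
  PsiDO_at sigma (fun t => expi (IZR j * t)) th v.
Proof.
  intros Hv P HP. exists (Z.abs_nat j). intros N HN.
  replace (sym_sum _ N) with v; [now apply locally_singleton | symmetry].
  unfold sym_sum. rewrite (sum_n_single _ (Z.to_nat (j + Z.of_nat N))).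
  - rewrite fourier_coef_expi, Z2Nat.id, Z.add_simpl_r, Z.eqb_refl, <- Hv by lia. ring.
  - lia.
  - intros m Hm. rewrite fourier_coef_expi.
    destruct (Z.eqb_spec (Z.of_nat m - Z.of_nat N) j); [lia | cbn; ring].
Qed.

Lemma ebasis_even (x : Z) : (0 <= x)%Z ->
  ebasis (2 * x) = fun t => expi (IZR (- x) * t).
Proof.
  intros Hx. apply functional_extensionality. intros t. unfold ebasis.
  replace (2 * x <? 0)%Z with false by (symmetry; apply Z.ltb_ge; lia).
  rewrite Z.even_mul, Z.mul_comm, Z.div_mul, opp_IZR by lia. reflexivity.
Qed.

Lemma ebasis_odd (x : Z) : (0 <= x)%Z ->
  ebasis (2 * x + 1) = fun t => expi (IZR (x + 1) * t).
Proof.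
  intros Hx. apply functional_extensionality. intros t. unfold ebasis.
  replace (2 * x + 1 <? 0)%Z with false by (symmetry; apply Z.ltb_ge; lia).
  replace (2 * x + 1 + 1)%Z with ((x + 1) * 2)%Z by ring.
  rewrite Z.even_add, Z.even_mul, Z.div_mul by lia. reflexivity.
Qed.

Definition ebasis_freq (k : nat) : Z :=
  if Nat.even k then (- Z.of_nat (Nat.div2 k))%Z else (Z.of_nat (Nat.div2 k) + 1)%Z.

Lemma ebasis_freq_even (m : nat) : ebasis_freq (2 * m) = (- Z.of_nat m)%Z.
Proof. unfold ebasis_freq. now rewrite Nat.even_mul, Nat.div2_double. Qed.

Lemma ebasis_freq_odd (m : nat) : ebasis_freq (2 * m + 1) = (Z.of_nat m + 1)%Z.
Proof.
  unfold ebasis_freq. rewrite Nat.add_1_r, Nat.even_succ, Nat.div2_succ_double.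
  now rewrite <- Nat.negb_even, Nat.even_mul.
Qed.

Lemma ebasis_expi (k : nat) :
  ebasis (Z.of_nat k) = fun t => expi (IZR (ebasis_freq k) * t).
Proof.
  destruct (Nat.Even_or_Odd k) as [[m ->]|[m ->]].
  - rewrite ebasis_freq_even, Nat2Z.inj_mul. apply ebasis_even. lia.
  - rewrite ebasis_freq_odd, Nat2Z.inj_add, Nat2Z.inj_mul. apply ebasis_odd. lia.
Qed.

Section Symbols.

Variables (q : R) (nu : C).

Lemma sigma_c_freq (k : nat) (th : R) :
  sigma_c q nu th (ebasis_freq k) = Cmult (RtoC (q ^ k)) nu.
Proof.
  unfold sigma_c. rewrite pow_powerRZ.
  destruct (Nat.Even_or_Odd k) as [[m ->]|[m ->]].
  - rewrite ebasis_freq_even.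
    destruct (Z.leb_spec (- Z.of_nat m) 0); [|lia].
    do 3 f_equal. lia.
  - rewrite ebasis_freq_odd.
    destruct (Z.leb_spec (Z.of_nat m + 1) 0); [lia|].
    do 3 f_equal. lia.
Qed.

Lemma sigma_a_freq (k : nat) (th : R) :
  Cmult (sigma_a q nu th (ebasis_freq k)) (expi (IZR (ebasis_freq k) * th)) =
  Cmult (RtoC (sqrt (1 - q ^ (2 * k)))) (ebasis (Z.of_nat k - 1) th).
Proof.
  unfold sigma_a. rewrite pow_powerRZ.
  destruct (Nat.Even_or_Odd k) as [[[|m] ->]|[m ->]].
  - cbn. rewrite Rminus_diag, sqrt_0. ring.
  - rewrite ebasis_freq_even.
    destruct (Z.eqb_spec (- Z.of_nat (S m)) 0); [lia|].
    destruct (Z.leb_spec 1 (- Z.of_nat (S m))); [lia|].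
    replace (Z.of_nat (2 * S m) - 1)%Z with (2 * Z.of_nat m + 1)%Z by lia.
    replace (2 * (-2 * - Z.of_nat (S m)))%Z with (Z.of_nat (2 * (2 * S m))) by lia.
    rewrite ebasis_odd, <- Cmult_assoc, expi_add by lia.
    do 2 f_equal.
    rewrite !plus_IZR, !mult_IZR, !opp_IZR, Nat2Z.inj_succ, succ_IZR. ring.
  - rewrite ebasis_freq_odd.
    destruct (Z.eqb_spec (Z.of_nat m + 1) 0); [lia|].
    destruct (Z.leb_spec 1 (Z.of_nat m + 1)); [|lia].
    replace (Z.of_nat (2 * m + 1) - 1)%Z with (2 * Z.of_nat m)%Z by lia.
    replace (2 * (2 * (Z.of_nat m + 1) - 1))%Z with (Z.of_nat (2 * (2 * m + 1))) by lia.
    rewrite ebasis_even, <- Cmult_assoc, expi_add by lia.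
    do 2 f_equal.
    rewrite !minus_IZR, !mult_IZR, !plus_IZR, !opp_IZR. ring.
Qed.

End Symbols.

Theorem mainTheorem1 (q : R) (nu : C) (hq0 : 0 < q) (hq1 : q < 1)
  (hnu : Cmod nu = 1) :
  forall (k : nat) (th : R),
    PsiDO_at (sigma_c q nu) (ebasis (Z.of_nat k)) th
      (Cmult (Cmult (RtoC (q ^ k)) nu) (ebasis (Z.of_nat k) th)) /\
    PsiDO_at (sigma_a q nu) (ebasis (Z.of_nat k)) th
      (Cmult (RtoC (sqrt (1 - q ^ (2 * k)))) (ebasis (Z.of_nat k - 1) th)).
Proof.
  intros k th. rewrite ebasis_expi. split; apply PsiDO_at_expi.
  - now rewrite sigma_c_freq.
  - apply sigma_a_freq.
Qed.
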